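(* Let $n\ge 2$ and $k\ge 1$. For all $i\in[0,k]$, $$\mathfrak{z}_i(n,k)=(k+1)\,\mathfrak{z}_i(n-1,k)+(i+1)\sum_{j=i+1}^{k}\mathfrak{z}_j(n-1,k).$$
   Context: A triword of size $n$ is a word $u=u_1\cdots u_n$ with $u_i\in\{0,1,2\}$, $u_1\ne 2$, and such that $u_i=0$ implies $u_j\neq 1$ for all $j>i$; $\mathsf{Tr}(n)$ is their set, ordered componentwise ($u\preccurlyeq v$ iff $u_i\le v_i$ for all $i$). A $k$-chain of $\mathsf{Tr}(n)$ is a sequence $[u^{(1)},\dots,u^{(k)}]$ of triwords of size $n$ with $u^{(1)}\preccurlyeq u^{(2)}\preccurlyeq\cdots\preccurlyeq u^{(k)}$ (repetitions allowed). For $i\in[0,k]$, $\mathcal{Z}_i(n,k)$ is the set of $k$-chains such that $u^{(r)}$ contains the letter $0$ for all $r\in[k-i]$ and $u^{(s)}$ does not contain the letter $0$ for all $s\in[k-i+1,k]$; $\mathfrak{z}_i(n,k):=\#\mathcal{Z}_i(n,k)$. *)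

From mathcomp Require Import all_boot all_order.
Set Implicit Arguments. Unset Strict Implicit. Unset Printing Implicit Defensive.

Definition is_triword (n : nat) (u : n.-tuple 'I_3) : bool :=
  (if n is _.+1 then nat_of_ord (nth ord0 u 0) != 2 else true) &&
  [forall i : 'I_n, forall j : 'I_n,
     ((i < j) && (nat_of_ord (tnth u i) == 0)) ==> (nat_of_ord (tnth u j) != 1)].

Definition tw_le (n : nat) (u v : n.-tuple 'I_3) : bool :=
  [forall i : 'I_n, nat_of_ord (tnth u i) <= nat_of_ord (tnth v i)].

Definition has_zero (n : nat) (u : n.-tuple 'I_3) : bool :=
  [exists i : 'I_n, nat_of_ord (tnth u i) == 0].

(* k-chains: k-tuples [u^(1),...,u^(k)] (stored 0-indexed) of triwords,
   weakly increasing. *)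
Definition is_chain (n k : nat) (c : k.-tuple (n.-tuple 'I_3)) : bool :=
  [forall r : 'I_k, is_triword (tnth c r)] &&
  [forall r : 'I_k, forall s : 'I_k, (r < s) ==> tw_le (tnth c r) (tnth c s)].

(* Z_i(n,k): chains whose u^(r) contains 0 for r in [1, k-i] and whose
   u^(s) contains no 0 for s in [k-i+1, k]. With 0-indexed position r,
   u^(r+1) contains 0 iff r < k - i. *)
Definition Zset (n k i : nat) : {set k.-tuple (n.-tuple 'I_3)} :=
  [set c | is_chain c &&
     [forall r : 'I_k, has_zero (tnth c r) == (nat_of_ord r < k - i)]].

Definition zfrak (i n k : nat) : nat := #|Zset n k i|.

From mathcomp Require Import all_boot all_order.
From mathcomp Require Import zify.
Set Implicit Arguments. Unset Strict Implicit. Unset Printing Implicit Defensive.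

(* Cut every word of a k-chain of size n >= 2 into its prefix of size n-1
   and its last letter.  The prefixes form a k-chain P of Tr(n-1); since the
   words of a chain that contain 0 form an initial segment, P lies in exactly
   one Z_j.  The last letters form a weakly increasing column, i.e. a word
   0^z 1^(t-z) 2^(k-t) with z <= t <= k, and the pair (P, column) comes from a
   chain of Tr(n) iff no 1 is appended to a word containing 0.  The joined
   chain lies in Z_i iff moreover max(k-j, z) = k-i.  Counting the admissible
   pairs (z, t) gives k+1 columns when j = i, i+1 when j > i and none when
   j < i. *)

Lemma forall_andb (T : finType) (P Q : pred T) :
  [forall x, P x && Q x] = [forall x, P x] && [forall x, Q x].
Proof.
apply/forallP/andP => [PQ|[/forallP P' /forallP Q'] x]; last by rewrite P' Q'.
by split; apply/forallP => x; case/andP: (PQ x).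
Qed.

Lemma forall_ltn_eq k a b : a <= k -> b <= k ->
  [forall r : 'I_k, (r < a) == (r < b)] = (a == b).
Proof.
move=> ak bk; apply/forallP/eqP => [eq_ab|-> r //].
have [lt_ab|lt_ba|//] := ltngtP a b.
  by have /eqP := eq_ab (Ordinal (leq_trans lt_ab bk)); rewrite /= ltnn lt_ab.
by have /eqP := eq_ab (Ordinal (leq_trans lt_ba ak)); rewrite /= ltnn lt_ba.
Qed.

Lemma forall_ltn_nth (T : Type) (x0 : T) (R : rel T) k (c : k.-tuple T) :
  [forall r : 'I_k, forall s : 'I_k, (r < s) ==> R (tnth c r) (tnth c s)] ->
  forall q r, q < r < k -> R (nth x0 c q) (nth x0 c r).
Proof.
move=> /forallP cR q r /andP[qr rk].
have /forallP/(_ (Ordinal rk)) := cR (Ordinal (ltn_trans qr rk)).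
by rewrite /= qr !(tnth_nth x0).
Qed.

Lemma nth_count_prefix (T : Type) (x0 : T) (p : pred T) (s : seq T) :
  (forall q r, q < r < size s -> p (nth x0 s r) -> p (nth x0 s q)) ->
  forall r, r < size s -> p (nth x0 s r) = (r < count p s).
Proof.
elim: s => [|x s IHs] p_closed r //=.
case px: (p x) => /=.
  case: r => [//|r] rs; apply: IHs => // q r' /andP[qr' r's].
  by apply: (p_closed q.+1 r'.+1); rewrite ltnS qr'.
have p_none r' : r' < (size s).+1 -> p (nth x0 (x :: s) r') = false.
  by case: r' => [//|r'] r's; apply: contraFF (p_closed 0 r'.+1 r's) px.
have count0 : count p s = 0.
  apply/eqP; rewrite -leqn0 leqNgt -has_count; apply/(has_nthP x0) => -[r' r's].
  by rewrite (p_none r'.+1).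
by move=> rs; rewrite (p_none r rs) count0.
Qed.

Definition letter (u : seq 'I_3) (p : nat) : nat := nth ord0 u p.

Lemma triwordP n (u : n.-tuple 'I_3) :
  reflect ((0 < n -> letter u 0 != 2) /\
           (forall p q, p < q < n -> letter u p = 0 -> letter u q != 1))
          (is_triword u).
Proof.
have -> : is_triword u = ((0 < n) ==> (letter u 0 != 2)) &&
   [forall i : 'I_n, forall j : 'I_n,
     ((i < j) && (nat_of_ord (tnth u i) == 0)) ==> (nat_of_ord (tnth u j) != 1)].
  by case: n u.
apply: (iffP andP) => [[/implyP u0 /forallP uP]|[u0 uP]]; split => //.
- move=> p q /andP[pq qn] up0.
  have /forallP/(_ (Ordinal qn)) := uP (Ordinal (ltn_trans pq qn)).
  by rewrite /= pq !(tnth_nth ord0) /=; move: up0; rewrite /letter => ->.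
- exact/implyP.
- apply/forallP => p; apply/forallP => q; apply/implyP => /andP[pq].
  by rewrite !(tnth_nth ord0) => /eqP; apply: uP; rewrite pq /=.
Qed.

Lemma tw_leP n (u v : n.-tuple 'I_3) :
  reflect (forall p, p < n -> letter u p <= letter v p) (tw_le u v).
Proof.
apply: (iffP forallP) => [uv p pn|uv p]; last by rewrite !(tnth_nth ord0) uv.
by have := uv (Ordinal pn); rewrite !(tnth_nth ord0).
Qed.

Lemma has_zeroP n (u : n.-tuple 'I_3) :
  reflect (exists2 p, p < n & letter u p = 0) (has_zero u).
Proof.
apply: (iffP existsP) => [[p /eqP up0]|[p pn /eqP up0]].
  by exists p; rewrite // /letter -(tnth_nth ord0).
by exists (Ordinal pn); rewrite (tnth_nth ord0).
Qed.

Section Rcons.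
Variables (m : nat) (w : m.-tuple 'I_3) (a : 'I_3).

Lemma letter_rcons p :
  letter (rcons w a) p = if p < m then letter w p else if p == m then nat_of_ord a else 0.
Proof. by rewrite /letter nth_rcons size_tuple; case: ifP => //; case: ifP. Qed.

Lemma has_zero_rcons : has_zero [tuple of rcons w a] = has_zero w || (nat_of_ord a == 0).
Proof.
apply/has_zeroP/orP => [[p]|[/has_zeroP[p pm wp0]|/eqP a0]].
- rewrite ltnS leq_eqVlt letter_rcons => /orP[/eqP->|pm].
    by rewrite ltnn eqxx; right; apply/eqP.
  by rewrite pm => wp0; left; apply/has_zeroP; exists p.
- by exists p; rewrite ?letter_rcons ?pm // ltnW.
- by exists m; rewrite ?letter_rcons ?ltnn ?eqxx.
Qed.

Lemma is_triword_rcons : 0 < m ->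
  is_triword [tuple of rcons w a] = is_triword w && ((nat_of_ord a == 1) ==> ~~ has_zero w).
Proof.
move=> m0; apply/triwordP/andP => [[u0 uP]|[/triwordP[w0 wP] a1]]; split.
- apply/triwordP; split; first by have := u0 isT; rewrite letter_rcons m0.
  move=> p q /andP[pq qm]; have := uP p q; rewrite !letter_rcons qm (ltn_trans pq qm).
  by apply; rewrite pq ltnW.
- apply/implyP => /eqP a1; apply/has_zeroP => -[p pm wp0].
  by have := uP p m; rewrite pm ltnS leqnn !letter_rcons pm ltnn eqxx a1 => /(_ isT wp0).
- by move=> _; rewrite letter_rcons m0; apply: w0.
- move=> p q /andP[pq]; rewrite ltnS leq_eqVlt => /orP[/eqP qm|qm].
    subst q; rewrite !letter_rcons pq ltnn eqxx => wp0; apply/eqP => a1'.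
    by move/implyP: a1 => /(_ (introT eqP a1'))/has_zeroP; apply; exists p.
  by rewrite !letter_rcons qm (ltn_trans pq qm); apply: wP; rewrite pq.
Qed.

End Rcons.

Lemma tw_le_rcons m (w w' : m.-tuple 'I_3) a a' :
  tw_le [tuple of rcons w a] [tuple of rcons w' a'] = tw_le w w' && (a <= a').
Proof.
apply/tw_leP/andP => [le_u|[/tw_leP le_w le_a] p]; first split.
- by apply/tw_leP => p pm; have := le_u p (ltnW pm); rewrite !letter_rcons pm.
- by have := le_u m (ltnSn m); rewrite !letter_rcons ltnn eqxx.
- rewrite ltnS leq_eqVlt => /orP[/eqP->|pm]; first by rewrite !letter_rcons ltnn eqxx.
  by rewrite !letter_rcons pm; apply: le_w.
Qed.

Section Columns.
Variable k : nat.
Implicit Type A : k.-tuple 'I_3.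

Definition monotone_col A :=
  [forall r : 'I_k, forall s : 'I_k, (r < s) ==> (tnth A r <= tnth A s)].

(* [zero r] tells whether the r-th word of a chain contains 0; [col_ok zero i A]
   says that appending the letters of A to its words gives a chain in Z_i. *)
Definition col_ok (zero : 'I_k -> bool) (i : nat) A :=
  [&& monotone_col A,
      [forall r, (nat_of_ord (tnth A r) == 1) ==> ~~ zero r] &
      [forall r, (zero r || (nat_of_ord (tnth A r) == 0)) == (r < k - i)]].

Lemma eq_col_ok (zero1 zero2 : 'I_k -> bool) i A :
  zero1 =1 zero2 -> col_ok zero1 i A = col_ok zero2 i A.
Proof.
by move=> eq_zero; congr [&& _, _ & _]; apply: eq_forallb => r; rewrite eq_zero.
Qed.

End Columns.

Section AppendColumn.
Variables m k : nat.

Definition cjoin (c : k.-tuple (m.-tuple 'I_3) * k.-tuple 'I_3) : k.-tuple (m.+1.-tuple 'I_3) :=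
  [tuple [tuple of rcons (tnth c.1 r) (tnth c.2 r)] | r < k].

Lemma cjoin_bij : bijective cjoin.
Proof.
apply: inj_card_bij; last by rewrite card_prod !card_tuple !card_ord -expnMn expnSr.
move=> [P A] [P' A'] /(congr1 (fun c => tnth c)) eqPA.
have eqr r : (tnth P r, tnth A r) = (tnth P' r, tnth A' r).
  have := congr1 val (congr1 (fun f => f r) eqPA); rewrite !tnth_mktuple.
  by move=> /rcons_inj[/val_inj -> ->].
by congr pair; apply: eq_from_tnth => r; case: (eqr r).
Qed.

Lemma in_Zset_cjoin i P A : 0 < m ->
  (cjoin (P, A) \in Zset m.+1 k i) =
  is_chain P && col_ok (fun r => has_zero (tnth P r)) i A.
Proof.
move=> m0; rewrite inE /is_chain.
have tnth_cjoin r : tnth (cjoin (P, A)) r = [tuple of rcons (tnth P r) (tnth A r)].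
  exact: tnth_mktuple.
have -> : [forall r, is_triword (tnth (cjoin (P, A)) r)] =
    [forall r, is_triword (tnth P r)] &&
    [forall r, (nat_of_ord (tnth A r) == 1) ==> ~~ has_zero (tnth P r)].
  by rewrite -forall_andb; apply: eq_forallb => r; rewrite tnth_cjoin is_triword_rcons.
have -> : [forall r : 'I_k, forall s : 'I_k,
             (r < s) ==> tw_le (tnth (cjoin (P, A)) r) (tnth (cjoin (P, A)) s)] =
    [forall r : 'I_k, forall s : 'I_k, (r < s) ==> tw_le (tnth P r) (tnth P s)] &&
    monotone_col A.
  rewrite -forall_andb; apply: eq_forallb => r; rewrite -forall_andb.
  by apply: eq_forallb => s; rewrite !tnth_cjoin tw_le_rcons; case: (r < s).
have -> : [forall r, has_zero (tnth (cjoin (P, A)) r) == (r < k - i)] =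
    [forall r, (has_zero (tnth P r) || (nat_of_ord (tnth A r) == 0)) == (r < k - i)].
  by apply: eq_forallb => r; rewrite tnth_cjoin has_zero_rcons.
rewrite /col_ok !andbA; set O := [forall r, (_ == 1) ==> _].
by rewrite (andbAC _ O) (andbAC _ O).
Qed.

End AppendColumn.

Section Profile.
Variables m k : nat.
Implicit Type P : k.-tuple (m.-tuple 'I_3).

Definition zero_count P : nat := count (@has_zero m) P.

Lemma zero_count_le P : zero_count P <= k.
Proof. by have := count_size (@has_zero m) P; rewrite size_tuple. Qed.

Lemma chain_has_zero P r : is_chain P -> has_zero (tnth P r) = (r < zero_count P).
Proof.
pose x0 : m.-tuple 'I_3 := [tuple of nseq m ord0].
case/andP=> _ /(forall_ltn_nth x0 (R := @tw_le m)) P_le; rewrite (tnth_nth x0).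
apply: nth_count_prefix; last by rewrite size_tuple.
move=> q s; rewrite size_tuple => /P_le/tw_leP le_qs /has_zeroP[p pm zero_p].
by apply/has_zeroP; exists p; move: (le_qs p pm); rewrite // zero_p leqn0 => /eqP.
Qed.

Lemma in_Zset_zero_count P j : j <= k ->
  (P \in Zset m k j) = is_chain P && (zero_count P == k - j).
Proof.
move=> jk; rewrite inE; apply: andb_id2l => chP.
under eq_forallb => r do rewrite chain_has_zero //.
by rewrite forall_ltn_eq ?leq_subr ?zero_count_le.
Qed.

Lemma sum_zero_count (F : nat -> nat) :
  \sum_(P | is_chain P) F (k - zero_count P) = \sum_(j < k.+1) F j * #|Zset m k j|.
Proof.
rewrite (partition_big (fun P => inord (k - zero_count P) : 'I_k.+1) xpredT) //.
apply: eq_bigr => j _; have jk : j <= k by rewrite -ltnS.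
rewrite (eq_big (fun P => P \in Zset m k j) (fun=> F j)) => [|P|P].
- by rewrite sum_nat_const mulnC.
- rewrite in_Zset_zero_count //; apply: andb_id2l => chP; have := zero_count_le P.
  by rewrite -val_eqE /= inordK ?ltnS ?leq_subr // => cP; apply/eqP/eqP; lia.
- by case/andP=> _ /eqP <-; rewrite inordK // ltnS leq_subr.
Qed.

End Profile.

Section Ramp.
Variable k : nat.
Implicit Types (A : k.-tuple 'I_3) (z t : nat).

Definition ramp z t : k.-tuple 'I_3 := [tuple inord ((z <= r) + (t <= r)) | r < k].

Lemma tnth_ramp z t r : tnth (ramp z t) r = (z <= r) + (t <= r) :> nat.
Proof. by rewrite tnth_mktuple inordK // ltnS; case: (z <= r); case: (t <= r). Qed.

Lemma ramp_eq0 z t r : z <= t -> (tnth (ramp z t) r == 0 :> nat) = (r < z).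
Proof. by rewrite tnth_ramp; case: (leqP z r); case: (leqP t r); lia. Qed.

Lemma ramp_le1 z t r : z <= t -> (tnth (ramp z t) r <= 1) = (r < t).
Proof. by rewrite tnth_ramp; case: (leqP z r); case: (leqP t r); lia. Qed.

Lemma monotone_col_ramp z t : z <= t -> monotone_col (ramp z t).
Proof.
move=> zt; apply/forallP => r; apply/forallP => s; apply/implyP => /ltnW rs.
rewrite !tnth_ramp.
by case: (leqP z r); case: (leqP t r); case: (leqP z s); case: (leqP t s); lia.
Qed.

Lemma ramp_inj z t z' t' : z <= t <= k -> z' <= t' <= k ->
  ramp z t = ramp z' t' -> (z, t) = (z', t').
Proof.
move=> /andP[zt tk] /andP[zt' tk'] eq_ramp.
have eq_thresholds c c' (f : 'I_3 -> bool) : c <= k -> c' <= k ->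
    (forall r, f (tnth (ramp z t) r) = (r < c)) ->
    (forall r, f (tnth (ramp z' t') r) = (r < c')) -> c = c'.
  move=> ck ck' fc fc'; apply/eqP; rewrite -(forall_ltn_eq ck ck').
  by apply/forallP => r; rewrite -fc -fc' eq_ramp.
congr pair.
  by apply: (eq_thresholds _ _ (fun x : 'I_3 => nat_of_ord x == 0)) => [||r|r];
    rewrite ?ramp_eq0 // ?(leq_trans zt) ?(leq_trans zt').
by apply: (eq_thresholds _ _ (fun x : 'I_3 => nat_of_ord x <= 1)) => // r; rewrite ramp_le1.
Qed.

Lemma monotone_col_rampE A : monotone_col A ->
  A = ramp (count (fun x : 'I_3 => nat_of_ord x == 0) A)
           (count (fun x : 'I_3 => nat_of_ord x <= 1) A).
Proof.
move/(forall_ltn_nth ord0 (R := fun x y : 'I_3 => x <= y)) => A_le.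
have count_prefix (c : nat) r : r < size A ->
    (nat_of_ord (nth ord0 A r) <= c) = (r < count (fun x : 'I_3 => nat_of_ord x <= c) A).
  apply: nth_count_prefix => q {}r; rewrite size_tuple => qr.
  by apply: leq_trans; apply: A_le.
apply: eq_from_tnth => r; apply: val_inj.
have := count_prefix 0 r; have := count_prefix 1 r; rewrite size_tuple ltn_ord.
have -> : count (fun x : 'I_3 => nat_of_ord x <= 0) A =
          count (fun x : 'I_3 => nat_of_ord x == 0) A.
  by apply: eq_count => x; rewrite /= leqn0.
rewrite /= tnth_ramp -!(tnth_nth ord0) => /(_ isT) le1 /(_ isT) le0.
by rewrite ![_ <= r]leqNgt -le0 -le1; case: (tnth A r) => -[|[|[|]]].
Qed.

Lemma card_monotone_col (Q : pred (k.-tuple 'I_3)) :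
  #|[set A | monotone_col A && Q A]| =
  #|[set p : 'I_k.+1 * 'I_k.+1 | (p.1 <= p.2) && Q (ramp p.1 p.2)]|.
Proof.
rewrite -[RHS](card_in_imset (f := fun p : 'I_k.+1 * 'I_k.+1 => ramp p.1 p.2)); last first.
  move=> [z t] [z' t']; rewrite !inE /= => /andP[zt _] /andP[zt' _].
  move/ramp_inj; rewrite zt zt' /= => /(_ (ltn_ord t) (ltn_ord t'))[eq_z eq_t].
  by congr pair; apply: val_inj.
apply: eq_card => A; rewrite inE; apply/idP/imsetP => [/andP[A_mono QA]|].
  move: (monotone_col_rampE A_mono); set c0 := count _ _; set c1 := count _ _ => A_ramp.
  have c01 : c0 <= c1 by apply: sub_count => x /eqP /= ->.
  have c1k : c1 < k.+1.
    by rewrite ltnS -(size_tuple A) count_size.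
  by exists (Ordinal (leq_ltn_trans c01 c1k), Ordinal c1k); rewrite // inE /= c01 -A_ramp.
by case=> -[z t]; rewrite inE /= => /andP[zt QA] ->; rewrite monotone_col_ramp.
Qed.

End Ramp.

Lemma card_ramp_pairs k a b : a <= k -> b <= k ->
  #|[set p : 'I_k.+1 * 'I_k.+1 |
      (p.1 <= p.2) && (((p.1 == p.2) || (a <= p.1)) && (maxn a p.1 == b))]| =
  (a == b) * a + (a <= b) * (k.+1 - b).
Proof.
move=> ak bk.
transitivity (\sum_(0 <= z < k.+1) \sum_(z <= t < k.+1)
                 (((z == t) || (a <= z)) && (maxn a z == b) : nat)).
  rewrite big_mkord; under [RHS]eq_bigr => z _ do rewrite big_geq_mkord.
  rewrite pair_big_dep -sum1dep_card big_mkcond [RHS]big_mkcond; apply: eq_bigr => -[z t] _ /=.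
  by case: (z <= t) => //=; case: ifP.
have inner z : z <= k -> \sum_(z <= t < k.+1) (((z == t) || (a <= z)) && (maxn a z == b) : nat) =
    if a <= z then (z == b) * (k.+1 - z) else (a == b).
  move=> zk; case: (leqP a z) => [az|za].
    by under eq_bigr => t _ do rewrite orbT; rewrite sum_nat_const_nat mulnC.
  rewrite big_ltn // eqxx big1_seq ?addn0 // => t.
  by rewrite mem_index_iota orbF => /and3P[_ zt _]; rewrite (ltn_eqF zt).
rewrite (eq_big_nat _ _ (F2 := fun z => if a <= z then (z == b) * (k.+1 - z) else a == b :> nat));
  last by move=> z /andP[_ zk]; rewrite inner.
rewrite (big_cat_nat _ (n := a)) ?(leqW ak) //=.
rewrite (eq_big_nat _ _ (F2 := fun=> nat_of_bool (a == b))); last first.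
  by move=> z /andP[_ za]; rewrite leqNgt za.
rewrite sum_nat_const_nat subn0 mulnC; congr (_ + _).
rewrite (eq_big_nat _ _ (F2 := fun z => if z == b then k.+1 - z else 0)); last first.
  by move=> z /andP[az _]; rewrite az; case: eqP; rewrite ?mul1n.
by rewrite -big_mkcond big_nat1_eq ltnS bk andbT; case: (a <= b); rewrite ?mul1n.
Qed.

Section RampColumns.
Variables (k : nat) (z t : nat).
Hypotheses (zt : z <= t) (tk : t <= k).

Lemma ramp_ones_above a :
  [forall r : 'I_k, (nat_of_ord (tnth (ramp k z t) r) == 1) ==> ~~ (r < a)] =
  (z == t) || (a <= z).
Proof.
apply/forallP/orP => [ones_above|[/eqP zt_eq|az] r]; last 2 first.
- by rewrite tnth_ramp zt_eq; case: (t <= r).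
- rewrite tnth_ramp -leqNgt; case: (leqP z r) => [zr|rz].
    by rewrite (leq_trans az zr) implybT.
  by rewrite [t <= r]leqNgt (leq_trans rz zt).
case: (ltngtP z t) => [lt_zt||->]; [right|by rewrite ltnNge zt|by left].
have /implyP := ones_above (Ordinal (leq_trans lt_zt tk)).
by rewrite tnth_ramp /= leqnn (leqNgt t) lt_zt -leqNgt; apply.
Qed.

Lemma ramp_zeros_below a b : a <= k -> b <= k ->
  [forall r : 'I_k, ((r < a) || (nat_of_ord (tnth (ramp k z t) r) == 0)) == (r < b)] =
  (maxn a z == b).
Proof.
move=> ak bk; rewrite -(@forall_ltn_eq k) ?geq_max ?ak ?(leq_trans zt tk) //.
by apply: eq_forallb => r; rewrite ramp_eq0 // leq_max.
Qed.

End RampColumns.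

Definition col_weight k j i : nat := if i < j then i.+1 else if i == j then k.+1 else 0.

Lemma card_col_ok k j i : j <= k -> i <= k ->
  #|[set A : k.-tuple 'I_3 | col_ok (fun r : 'I_k => r < k - j) i A]| = col_weight k j i.
Proof.
move=> jk ik; rewrite /col_ok card_monotone_col.
rewrite (eq_card (B := [set p : 'I_k.+1 * 'I_k.+1 | (p.1 <= p.2) &&
    (((p.1 == p.2) || (k - j <= p.1)) && (maxn (k - j) p.1 == k - i))])); last first.
  move=> [z t]; rewrite !inE /=; case/boolP: (z <= t) => //= zt.
  by rewrite ramp_ones_above ?ramp_zeros_below ?leq_subr // -ltnS.
rewrite card_ramp_pairs ?leq_subr //.
have -> : (k - j == k - i) = (i == j) by apply/eqP/eqP; lia.
have -> : (k - j <= k - i) = (i <= j) by apply/idP/idP; lia.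
by rewrite /col_weight; case: ltngtP => [ij|ji|<-]; rewrite ?mul0n ?mul1n /=; lia.
Qed.

Lemma card_col_ok_chain m k i (P : k.-tuple (m.-tuple 'I_3)) : is_chain P -> i <= k ->
  #|[set A | col_ok (fun r => has_zero (tnth P r)) i A]| = col_weight k (k - zero_count P) i.
Proof.
move=> chP ik; rewrite -card_col_ok ?leq_subr //; apply: eq_card => A; rewrite !inE.
by apply: eq_col_ok => r; rewrite chain_has_zero // subKn ?zero_count_le.
Qed.

Lemma zfrakS m k i : 0 < m -> i <= k ->
  zfrak i m.+1 k = \sum_(j < k.+1) col_weight k j i * zfrak j m k.
Proof.
move=> m0 ik; rewrite /zfrak -sum1_card (reindex _ (onW_bij _ (cjoin_bij m k))) /=.
rewrite (eq_bigl (fun p => is_chain p.1 && col_ok (fun r => has_zero (tnth p.1 r)) i p.2));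
  last by move=> [P A]; rewrite in_Zset_cjoin.
rewrite -(pair_big_dep (@is_chain m k) (fun P A => col_ok (fun r => has_zero (tnth P r)) i A)
                       (fun _ _ => 1)) /=.
under eq_bigr => P chP do rewrite sum1dep_card card_col_ok_chain //.
exact: (@sum_zero_count m k (fun j => col_weight k j i)).
Qed.

Lemma sum_col_weight k i (f : nat -> nat) : i <= k ->
  \sum_(j < k.+1) col_weight k j i * f j = k.+1 * f i + i.+1 * \sum_(i.+1 <= j < k.+1) f j.
Proof.
move=> ik; rewrite -(big_mkord xpredT (fun j => col_weight k j i * f j)).
rewrite (big_cat_nat _ (n := i)) ?leqW //= (big_ltn (m := i)) ?ltnS //.
rewrite big1_seq => [|j]; last first.
  by rewrite mem_index_iota /col_weight => /andP[_ ji]; rewrite ltnNge ltnW // gtn_eqF.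
rewrite big_distrr /= /col_weight ltnn eqxx add0n; congr (_ + _).
by apply: eq_big_nat => j /andP[ij _]; rewrite ij.
Qed.

Theorem proposition3p6 (n k : nat) (hn : 2 <= n) (hk : 1 <= k) (i : nat) (hi : i <= k) :
  zfrak i n k =
    (k + 1) * zfrak i n.-1 k + (i + 1) * \sum_(i.+1 <= j < k.+1) zfrak j n.-1 k.
Proof.
case: n hn => [|m] // hm.
by rewrite zfrakS // (sum_col_weight (fun j => zfrak j m k)) // !addn1.
Qed.
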